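(* Let $\gamma\ge2$ be an integer, $\varepsilon\ge0$, and $P_0$ a probability measure on $\mathbb{R}^n$. For $P\in N_\gamma(P_0)$ define: (i) $\mathbf{Q}^\star_\varepsilon(P)$ as the probability measure $Q\ll P_0$ with $\frac{dQ}{dP_0}(x)=\mathrm{clip}\big(\frac1{r_P}\frac{dP}{dP_0}(x);\frac{\gamma+1}{\gamma+e^\varepsilon},\frac{(\gamma+1)e^\varepsilon}{\gamma+e^\varepsilon}\big)$, where $r_P>0$ is chosen so that $Q$ has total mass $1$; (ii) $\mathbf{Q}^\star_{g_\varepsilon}(P)=\lambda P+(1-\lambda)P_0$ with $\lambda=\frac{e^\varepsilon-1}{(1-\frac1\gamma)e^\varepsilon+\gamma-1}=\frac{\gamma(e^\varepsilon-1)}{(\gamma-1)(e^\varepsilon+\gamma)}$. Then for every $f$-divergence $D_f$ and every $P\in N_\gamma(P_0)$, $D_f(P\|\mathbf{Q}^\star_\varepsilon(P))\le D_f(P\|\mathbf{Q}^\star_{g_\varepsilon}(P))$.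
   Context: $\mathrm{clip}(x;s_1,s_2)=\max\{s_1,\min\{s_2,x\}\}$. For $\gamma\ge1$, $E_\gamma(P\|Q)=\mathbb{E}_Q[\max\{\frac{dP}{dQ}-\gamma,0\}]$ and $N_\gamma(P_0)=\{P:E_\gamma(P\|P_0)=E_\gamma(P_0\|P)=0\}$, equivalently the $P\ll P_0$ with $\frac1\gamma\le\frac{dP}{dP_0}\le\gamma$. $D_f(P\|Q)=\int qf(p/q)\,d\nu$ for convex $f:(0,\infty)\to\mathbb{R}$ with $f(1)=0$, densities w.r.t. a dominating measure $\nu$, conventions $f(0)=\lim_{t\to0^+}f(t)$, $0f(0/0)=0$, $0f(a/0)=a\lim_{u\to\infty}f(u)/u$. (In the paper these two maps are, on $N_\gamma(P_0)$, the locally minimax-optimal $\varepsilon$-LDP sampler and the locally minimax-optimal $g_\varepsilon$-FLDP mixture sampler.) *)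

From HB Require Import structures.
From mathcomp Require Import all_boot all_order all_algebra.
From mathcomp Require Import all_classical all_reals all_analysis.
Set Implicit Arguments. Unset Strict Implicit. Unset Printing Implicit Defensive.
Import Order.TTheory GRing.Theory Num.Theory.
Import numFieldNormedType.Exports.
Local Open Scope classical_set_scope.
Local Open Scope ring_scope.

Definition clip (R : realType) (x s1 s2 : R) : R := Num.max s1 (Num.min s2 x).

Definition convex_pos (R : realType) (f : R -> R) : Prop :=
  forall x y t : R, 0 < x -> 0 < y -> 0 <= t <= 1 ->
    f (t * x + (1 - t) * y) <= t * f x + (1 - t) * f y.

Definition is_density (d : measure_display) (T : measurableType d) (R : realType)
  (P0 P : set T -> \bar R) (p : T -> R) : Prop :=
  measurable_fun setT p /\
  forall A, measurable A -> P A = (\int[P0]_(x in A) (p x)%:E)%E.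

(* pointwise integrand q f(p/q) with the conventions
   f(0) = lim_{t->0+} f t, 0 f(0/0) = 0, 0 f(a/0) = a lim_{u->oo} f(u)/u *)
Definition fdiv_integrand (R : realType) (f : R -> R) (p q : R) : \bar R :=
  if 0 < q then
    (if 0 < p then (q * f (p / q))%:E
     else (q%:E * lim ((f t)%:E @[t --> 0^'+]))%E)
  else if 0 < p then (p%:E * lim ((f u / u)%:E @[u --> +oo%R]))%E
  else 0%E.

(* D_f(P || Q) for densities p = dP/dnu, q = dQ/dnu w.r.t. dominating nu *)
Definition fdiv (d : measure_display) (T : measurableType d) (R : realType)
  (nu : set T -> \bar R) (f : R -> R) (p q : T -> R) : \bar R :=
  (\int[nu]_x fdiv_integrand f (p x) (q x))%E.

(* density dQ*_eps(P)/dP0 given the normalising constant r *)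
Definition qstar_eps (T : Type) (R : realType) (gamma eps r : R) (p : T -> R) : T -> R :=
  fun x => clip (p x / r) ((gamma + 1) / (gamma + expR eps))
                          ((gamma + 1) * expR eps / (gamma + expR eps)).

Definition lambda_g (R : realType) (gamma eps : R) : R :=
  (expR eps - 1) / ((1 - gamma^-1) * expR eps + gamma - 1).

(* density d(lambda P + (1 - lambda) P0)/dP0 *)
Definition qstar_g (T : Type) (R : realType) (gamma eps : R) (p : T -> R) : T -> R :=
  fun x => lambda_g gamma eps * p x + (1 - lambda_g gamma eps).

(* Both Q*_eps(P) and Q*_g(P) have densities w.r.t. P0 with values in
   [a, b] = [(g+1)/(g+e^eps), (g+1)e^eps/(g+e^eps)] and total mass 1; for the
   mixture this is because lambda is exactly the weight for which
   y |-> lambda y + 1 - lambda maps [1/g, g] onto [a, b].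
   Let d be a subgradient of f at r and c = f r - d r.  For fixed p > 0 the
   perspective phi z = z f(p/z) - c z is convex on (0, oo) and minimal at
   z = p/r, hence minimal on [a, b] at clip(p/r; a, b).  So pointwise
   h1 - c q1 <= h2 - c q2 for the two f-divergence integrands, and integrating
   with int q1 = int q2 = 1 gives the claim.  The a.e. bound on dP/dP0 is
   first made an everywhere bound by clipping the density on a null set. *)

From mathcomp Require Import all_boot all_order all_algebra.
From mathcomp Require Import all_classical all_reals all_analysis.
From mathcomp Require Import ring lra measurable_realfun.
Import Order.TTheory GRing.Theory Num.Theory.
Import numFieldNormedType.Exports.

Set Implicit Arguments.
Unset Strict Implicit.
Unset Printing Implicit Defensive.
Local Open Scope classical_set_scope.
Local Open Scope ring_scope.

Lemma clip_bounds (R : realType) (x s1 s2 : R) : s1 <= s2 -> s1 <= clip x s1 s2 <= s2.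
Proof. by move=> s12; rewrite /clip le_max lexx ge_max s12 ge_min lexx. Qed.

Lemma clip_id (R : realType) (x s1 s2 : R) : s1 <= x <= s2 -> clip x s1 s2 = x.
Proof. by move=> /andP[s1x xs2]; rewrite /clip (min_idPr xs2) (max_idPr s1x). Qed.

Lemma measurable_clip d (T : measurableType d) (R : realType) (h : T -> R) (s1 s2 : R) :
  measurable_fun setT h -> measurable_fun setT (fun x => clip (h x) s1 s2).
Proof.
move=> mh; apply: (measurable_maxr (f := cst s1)); first exact: measurable_cst.
by apply: (measurable_minr (f := cst s2)) => //; exact: measurable_cst.
Qed.

Section convex_pos_theory.
Variables (R : realType) (f : R -> R).
Hypothesis hf : convex_pos f.

Lemma convex_pos_chord x y z : 0 < x -> x < y -> x <= z <= y ->
  f z <= f x + (z - x) / (y - x) * (f y - f x).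
Proof.
move=> x0 xy /andP[xz zy].
have yx : y - x != 0 by rewrite subr_eq0 gt_eqF.
pose t := (y - z) / (y - x).
have t01 : 0 <= t <= 1.
  by rewrite /t divr_ge0 ?ler_pdivrMr ?subr_gt0 ?mul1r /=; lra.
have := hf x0 (lt_trans x0 xy) t01.
have -> : t * x + (1 - t) * y = z by rewrite /t; field.
suff -> : t * f x + (1 - t) * f y = f x + (z - x) / (y - x) * (f y - f x) by [].
by rewrite /t; field.
Qed.

Lemma convex_pos_le_max x y z : 0 < x -> x <= z <= y ->
  f z <= Num.max (f x) (f y).
Proof.
move=> x0 /andP[xz zy]; have [yx|xy] := leP y x.
  have -> : z = x by apply/le_anti; rewrite xz (le_trans zy yx).
  by rewrite le_max lexx.
have := convex_pos_chord x0 xy (introT andP (conj xz zy)).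
have : 0 <= (z - x) / (y - x) <= 1.
  by rewrite divr_ge0 ?ler_pdivrMr ?subr_gt0 ?mul1r /=; lra.
have := le_max (f x) (f x) (f y); have := le_max (f y) (f x) (f y).
rewrite !lexx orbT /=.
set u := _ / _; set m := Num.max _ _ => hy hx /andP[u0 u1] h.
nra.
Qed.

Lemma convex_pos_slope_le x z y : 0 < x -> x < z -> z < y ->
  (f z - f x) / (z - x) <= (f y - f z) / (y - z).
Proof.
move=> x0 xz zy.
have h := convex_pos_chord x0 (lt_trans xz zy) (introT andP (conj (ltW xz) (ltW zy))).
have [zx0 yz0 yx0] : [/\ 0 < z - x, 0 < y - z & 0 < y - x] by split; lra.
rewrite ler_pdivrMr // mulrAC ler_pdivlMr //.
have : (f z - f x) * (y - x) <= (z - x) * (f y - f x).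
  by rewrite -ler_pdivlMr // mulrAC; lra.
nra.
Qed.

Lemma convex_pos_subgradient r : 0 < r ->
  exists d, forall y, 0 < y -> f r + d * (y - r) <= f y.
Proof.
move=> r0.
pose S := [set (f r - f x) / (r - x) | x in `]0, r[%classic].
have S0 : S !=set0 by exists ((f r - f (r / 2)) / (r - r / 2)); exists (r / 2);
  rewrite //= in_itv /=; lra.
have ubS y : r < y -> ubound S ((f y - f r) / (y - r)).
  by move=> ry _ [x + <-]; rewrite /= in_itv /= => /andP[x0 xr]; exact: convex_pos_slope_le.
have hS : has_sup S by split=> //; exists ((f (r + 1) - f r) / (r + 1 - r)); apply: ubS; lra.
exists (sup S) => y y0; have [yr|ry|->] := ltgtP y r; last by rewrite subrr mulr0 addr0.
- have : (f r - f y) / (r - y) <= sup S.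
    by apply: sup_upper_bound => //; exists y; rewrite //= in_itv /= y0.
  by rewrite ler_pdivrMr ?subr_gt0 // => h; nra.
- have : sup S <= (f y - f r) / (y - r) by apply: ge_sup => //; exact: ubS.
  by rewrite ler_pdivlMr ?subr_gt0 // => h; nra.
Qed.

Lemma convex_pos_measurable : measurable_fun (`]0, +oo[%classic : set R) f.
Proof.
apply: (measurability _ (RGenInftyO.measurableE R)) => _ [_ [a ->] <-].
apply: is_interval_measurable => x y [+ fxa] [+ fya] z /andP[xz zy].
move: fxa fya; rewrite /= !in_itv /= !andbT => fxa fya x0 y0; split; first lra.
apply: le_lt_trans (convex_pos_le_max x0 (introT andP (conj xz zy))) _.
by rewrite gt_max fxa fya.
Qed.

Lemma convex_pos_bounded lo hi : 0 < lo ->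
  exists M, forall y, lo <= y <= hi -> `|f y| <= M.
Proof.
move=> lo0; have [d hd] := convex_pos_subgradient ltr01.
exists (`|f lo| + `|f hi| + `|f 1| + `|d| * (hi + 1)) => y /andP[loy yhi].
have y0 : 0 < y by lra.
have upper : f y <= `|f lo| + `|f hi|.
  apply: le_trans (convex_pos_le_max lo0 (introT andP (conj loy yhi))) _.
  have := ler_norm (f lo); have := ler_norm (f hi); have := normr_ge0 (f lo).
  by have := normr_ge0 (f hi); rewrite ge_max; move=> *; apply/andP; split; lra.
have lower : - (`|f 1| + `|d| * (hi + 1)) <= f y.
  have : `|d * (y - 1)| <= `|d| * (hi + 1).
    by rewrite normrM ler_wpM2l // ler_norml; apply/andP; split; lra.
  have := hd y y0; have := ler_norm (- f 1); have := ler_norm (- (d * (y - 1))).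
  rewrite !normrN; lra.
have := normr_ge0 (f lo); have := normr_ge0 (f hi); have := normr_ge0 (f 1).
have : 0 <= `|d| * (hi + 1) by rewrite mulr_ge0 //; lra.
by rewrite ler_norml => *; apply/andP; split; lra.
Qed.

Lemma convex_pos_clip_le s a b q : 0 < s -> (forall z, 0 < z -> f s <= f z) ->
  0 < a -> a <= q <= b -> f (clip s a b) <= f q.
Proof.
move=> s0 fmin a0 /andP[aq qb]; have q0 : 0 < q by lra.
rewrite /clip; have [sa|lt_as] := leP s a.
  rewrite (min_idPr (le_trans sa (le_trans aq qb))) (max_idPl sa).
  by rewrite -(max_idPr (fmin q q0)) convex_pos_le_max // sa aq.
have [bs|sb] := leP b s.
  rewrite (max_idPr (le_trans aq qb)).
  by rewrite -(max_idPl (fmin q q0)) convex_pos_le_max // qb bs.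
by rewrite (max_idPr (ltW lt_as)) fmin.
Qed.

Lemma convex_pos_perspective p : 0 < p -> convex_pos (fun q => q * f (p / q)).
Proof.
move=> p0 x y t x0 y0 /andP[t0 t1].
pose m := t * x + (1 - t) * y.
have m0 : 0 < m.
  rewrite /m; have [->|tpos] := eqVneq t 0; first by rewrite mul0r add0r subr0 mul1r.
  have : 0 < t * x by rewrite mulr_gt0 // lt_neqAle eq_sym tpos.
  have : 0 <= (1 - t) * y by rewrite mulr_ge0 ?subr_ge0 // ltW.
  lra.
pose s := t * x / m.
have s01 : 0 <= s <= 1.
  have ty : 0 <= (1 - t) * y by rewrite mulr_ge0 ?subr_ge0 // ltW.
  have tx : 0 <= t * x by rewrite mulr_ge0 // ltW.
  by rewrite /s divr_ge0 ?(ltW m0) // ler_pdivrMr // mul1r /m; lra.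
have := ler_wpM2l (ltW m0) (hf (divr_gt0 p0 x0) (divr_gt0 p0 y0) s01).
have -> : s * (p / x) + (1 - s) * (p / y) = p / m.
  by rewrite /s /m; field; rewrite !gt_eqF // -/m.
suff -> : m * (s * f (p / x) + (1 - s) * f (p / y)) =
          t * (x * f (p / x)) + (1 - t) * (y * f (p / y)) by [].
by rewrite /s /m; field; rewrite gt_eqF -/m.
Qed.

End convex_pos_theory.

Lemma convex_pos_subr_linear (R : realType) (g : R -> R) c :
  convex_pos g -> convex_pos (fun z => g z - c * z).
Proof.
move=> hg x y t x0 y0 t01; have := hg _ _ _ x0 y0 t01.
suff -> : c * (t * x + (1 - t) * y) = t * (c * x) + (1 - t) * (c * y) by lra.
by ring.
Qed.

Lemma perspective_clip_le (R : realType) (f : R -> R) r :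
  convex_pos f -> 0 < r -> exists c, forall p a b q, 0 < p -> 0 < a -> a <= q <= b ->
    clip (p / r) a b * f (p / clip (p / r) a b) - c * clip (p / r) a b
      <= q * f (p / q) - c * q.
Proof.
move=> hf r0; have [d hd] := convex_pos_subgradient hf r0.
exists (f r - d * r) => p a b q p0 a0 hq.
pose phi z := z * f (p / z) - (f r - d * r) * z.
have phi_min z : 0 < z -> phi (p / r) <= phi z.
  move=> z0; have := ler_wpM2l (ltW z0) (hd _ (divr_gt0 p0 z0)).
  have -> : z * (f r + d * (p / z - r)) = (f r - d * r) * z + d * p.
    by field; rewrite gt_eqF.
  suff -> : phi (p / r) = d * p by rewrite /phi; lra.
  rewrite /phi (_ : p / (p / r) = r); first by field; rewrite gt_eqF.
  by field; rewrite !gt_eqF.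
have := convex_pos_subr_linear (f r - d * r) (convex_pos_perspective hf p0).
by move/convex_pos_clip_le; apply => //; exact: divr_gt0.
Qed.

Section fdiv_measurability.
Context d (T : measurableType d) (R : realType).

Let Rpos := (`]0, +oo[%classic : set R).

Lemma measurable_invr_pos : measurable_fun Rpos (@GRing.inv R).
Proof.
apply: open_continuous_measurable_fun; first exact: interval_open.
move=> x; rewrite /Rpos inE /= in_itv /= andbT => x0.
by apply: inv_continuous; rewrite gt_eqF.
Qed.

Lemma measurable_fdiv_integrand (f : R -> R) (p q : T -> R) :
  measurable_fun Rpos f -> measurable_fun setT p -> measurable_fun setT q ->
  measurable_fun setT (fun x => fdiv_integrand f (p x) (q x)).
Proof.
move=> mf mp mq.
have mgt0 (h : T -> R) D : measurable_fun setT h -> measurable_fun D (fun x => 0 < h x).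
  by move=> mh; apply: measurable_funTS; apply: measurable_fun_ltr => //; exact: measurable_cst.
have mpatch (g : R -> R) : measurable_fun Rpos g -> measurable_fun setT (g \_ Rpos).
  by move=> mg; apply/(measurable_restrictT _ (measurable_itv _)).
have pos_in (u : R) : 0 < u -> u \in Rpos by move=> u0; rewrite /Rpos inE /= in_itv /= andbT.
rewrite /fdiv_integrand; apply: measurable_fun_if => //; first exact: mgt0.
- apply: measurable_fun_if => //; [exact: (mgt0 _ _ mq) | exact: mgt0 | |].
  (* when p, q > 0 the integrand only evaluates f and ^-1 on Rpos *)
  + apply: (eq_measurable_fun
      (fun x => (q x * (f \_ Rpos) (p x * (GRing.inv \_ Rpos) (q x)))%:E)).
      move=> x /[!inE] -[[_ /= q0] /= p0].
      by rewrite !patchE !pos_in ?divr_gt0.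
    apply/measurable_EFinP/measurable_funTS/measurable_funM => //.
    apply: measurableT_comp; first exact: mpatch.
    apply: measurable_funM => //; apply: measurableT_comp => //.
    exact: mpatch measurable_invr_pos.
  + apply: emeasurable_funM; last exact: measurable_cst.
    by apply/measurable_EFinP; exact: measurable_funTS.
- apply: measurable_fun_if => //; [exact: (mgt0 _ _ mq) | exact: mgt0 |].
  apply: emeasurable_funM; last exact: measurable_cst.
  by apply/measurable_EFinP; exact: measurable_funTS.
Qed.

End fdiv_measurability.

Lemma fdiv_integrand_pos (R : realType) (f : R -> R) p q : 0 < p -> 0 < q ->
  fdiv_integrand f p q = (q * f (p / q))%:E.
Proof. by move=> p0 q0; rewrite /fdiv_integrand p0 q0. Qed.

Section perspective_integral.
Context d (T : measurableType d) (R : realType).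
Local Open Scope ereal_scope.

Lemma le_integral_compensated (mu : {measure set T -> \bar R}) (h1 h2 q1 q2 : T -> R) (c : R) :
  mu.-integrable setT (EFin \o h1) -> mu.-integrable setT (EFin \o h2) ->
  mu.-integrable setT (EFin \o q1) -> mu.-integrable setT (EFin \o q2) ->
  (forall x, h1 x - c * q1 x <= h2 x - c * q2 x)%R ->
  \int[mu]_x (q1 x)%:E = \int[mu]_x (q2 x)%:E ->
  \int[mu]_x (h1 x)%:E <= \int[mu]_x (h2 x)%:E.
Proof.
move=> ih1 ih2 iq1 iq2 hle q12.
have iq12 : mu.-integrable setT (fun x => c%:E * ((q1 x)%:E - (q2 x)%:E)).
  by apply: integrableZl => //; exact: integrableB.
apply: (@le_trans _ _ (\int[mu]_x ((h2 x)%:E + c%:E * ((q1 x)%:E - (q2 x)%:E)))).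
  apply: le_integral => //; first exact: integrableD.
  by move=> x _; rewrite /= -EFinB -EFinM -EFinD lee_fin; have := hle x; lra.
rewrite integralD // integralZl //; last exact: integrableB.
by rewrite integralB_EFin // q12 subee ?mule0 ?adde0 // integrable_fin_num.
Qed.

Variable mu : {finite_measure set T -> \bar R}.

Lemma bounded_integrable (h : T -> R) (M : R) :
  measurable_fun setT h -> (forall x, (`|h x| <= M)%R) -> mu.-integrable setT (EFin \o h).
Proof.
move=> mh hM; apply: measurable_bounded_integrable => //.
  exact: fin_num_fun_lty (@fin_num_measure _ _ _ mu).
exists M; split; first exact: num_real.
by move=> N MN x _; exact: le_trans (hM x) (ltW MN).
Qed.

Variable f : R -> R.
Hypothesis hf : convex_pos f.

Lemma integrable_perspective (p z : T -> R) (lo hi a b : R) :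
  (0 < lo)%R -> (0 < a)%R -> measurable_fun setT p -> measurable_fun setT z ->
  (forall x, lo <= p x <= hi)%R -> (forall x, a <= z x <= b)%R ->
  mu.-integrable setT (fun x => (z x * f (p x / z x))%:E).
Proof.
move=> lo0 a0 mp mz hp hz.
have p0 x : (0 < p x)%R by have := hp x; lra.
have z0 x : (0 < z x)%R by have := hz x; lra.
have b0 : (0 < b)%R by have := hz point; lra.
have [M hM] := convex_pos_bounded hf (hi / a)%R (divr_gt0 lo0 b0).
apply: (bounded_integrable (M := (b * M)%R)).
  apply/measurable_EFinP; rewrite (_ : _ \o _ = fun x => fdiv_integrand f (p x) (z x)).
    exact: measurable_fdiv_integrand (convex_pos_measurable hf) mp mz.
  by apply/funext => x; rewrite fdiv_integrand_pos.
move=> x; have /andP[lop phi] := hp x; have /andP[az zb] := hz x.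
rewrite normrM ger0_norm; last exact: ltW.
apply: ler_pM => //; first exact: ltW.
apply: hM; apply/andP; split.
  by rewrite ler_pdivrMr // mulrAC ler_pdivlMr //; nra.
by rewrite ler_pdivlMr // mulrAC ler_pdivrMr //; nra.
Qed.

Lemma integral_perspective_clip_le (p q : T -> R) (lo hi a b r : R) :
  (0 < lo)%R -> (0 < a)%R -> (0 < r)%R ->
  measurable_fun setT p -> measurable_fun setT q ->
  (forall x, lo <= p x <= hi)%R -> (forall x, a <= q x <= b)%R ->
  \int[mu]_x (clip (p x / r) a b)%:E = \int[mu]_x (q x)%:E ->
  \int[mu]_x (clip (p x / r) a b * f (p x / clip (p x / r) a b))%:E
    <= \int[mu]_x (q x * f (p x / q x))%:E.
Proof.
move=> lo0 a0 r0 mp mq hp hq int_eq.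
have ab : (a <= b)%R by have := hq point; lra.
pose q1 x := clip (p x / r) a b.
have hq1 x : (a <= q1 x <= b)%R by exact: clip_bounds.
have mq1 : measurable_fun setT q1.
  by apply: measurable_clip; apply: measurable_funM => //; exact: measurable_cst.
have int_ab (z : T -> R) : measurable_fun setT z -> (forall x, a <= z x <= b)%R ->
    mu.-integrable setT (EFin \o z).
  move=> mz hz; apply: (bounded_integrable (M := b)) => // x.
  by have := hz x; rewrite ler_norml; lra.
have [c hc] := perspective_clip_le hf r0.
apply: (le_integral_compensated (c := c) _ _ (int_ab _ mq1 hq1) (int_ab _ mq hq)) => //.
- exact: (integrable_perspective lo0 a0 mp mq1 hp hq1).
- exact: (integrable_perspective lo0 a0 mp mq hp hq).
- by move=> x; apply: hc; [have := hp x; lra | | exact: hq].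
Qed.

End perspective_integral.

Section ae_change_of_density.
Context d (T : measurableType d) (R : realType) (mu : {measure set T -> \bar R}).
Variables p p' : T -> R.
Hypotheses (mp : measurable_fun setT p) (mp' : measurable_fun setT p').
Hypothesis pp' : {ae mu, forall x, p x = p' x}.

Lemma integral_comp_ae_eq (G : R -> \bar R) : measurable_fun setT G ->
  (\int[mu]_x G (p x) = \int[mu]_x G (p' x))%E.
Proof.
move=> mG; apply: ae_eq_integral => //; [exact: measurableT_comp | exact: measurableT_comp |].
by apply: filterS pp' => x ->.
Qed.

Lemma fdiv_comp_ae_eq (f F : R -> R) :
  measurable_fun (`]0, +oo[%classic : set R) f -> measurable_fun setT F ->
  fdiv mu f p (F \o p) = fdiv mu f p' (F \o p').
Proof.
move=> mf mF; apply: (integral_comp_ae_eq (G := fun y => fdiv_integrand f y (F y))).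
exact: measurable_fdiv_integrand.
Qed.

End ae_change_of_density.

Lemma fdiv_pos d (T : measurableType d) (R : realType) (mu : {measure set T -> \bar R})
    (f : R -> R) (p q : T -> R) :
  (forall x, 0 < p x) -> (forall x, 0 < q x) ->
  fdiv mu f p q = (\int[mu]_x (q x * f (p x / q x))%:E)%E.
Proof. by move=> p0 q0; apply: eq_integral => x _; rewrite fdiv_integrand_pos. Qed.

Lemma integral_mixture d (T : measurableType d) (R : realType) (mu : probability T R)
    (u : T -> R) (l : R) :
  mu.-integrable setT (EFin \o u) -> (\int[mu]_x (u x)%:E = 1)%E ->
  (\int[mu]_x (l * u x + (1 - l))%:E = 1)%E.
Proof.
move=> iu u1.
rewrite (eq_integral (fun x => l%:E * (u x)%:E + cst (1 - l)%:E x))%E; last first.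
  by move=> x _; rewrite EFinD EFinM.
rewrite integralD //; [|exact: integrableZl|exact: finite_measure_integrable_cst].
rewrite integralZl // u1 integral_cst //.
transitivity (l%:E * 1 + (1 - l)%:E * 1)%E; last by rewrite !mule1 -EFinD addrC subrK.
by congr (_ + _ * _)%E; exact: probability_setT.
Qed.

Lemma lambda_g_mixture_bounds (R : realType) (g eps y : R) :
  1 < g -> 0 <= eps -> g^-1 <= y <= g ->
  (g + 1) / (g + expR eps) <= lambda_g g eps * y + (1 - lambda_g g eps)
    <= (g + 1) * expR eps / (g + expR eps).
Proof.
move=> g1 eps0 /andP[gy yg].
have E1 : 1 <= expR eps by have := expR_ge1Dx eps; lra.
have gi1 : g^-1 < 1 by rewrite invf_lt1 //; lra.
have D0 : 0 < (1 - g^-1) * expR eps + g - 1.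
  have : 0 < (1 - g^-1) * expR eps by rewrite mulr_gt0 //; lra.
  lra.
have lam0 : 0 <= lambda_g g eps by rewrite divr_ge0 //; lra.
have gE : g + expR eps != 0 by rewrite gt_eqF //; lra.
have g0 : g != 0 by rewrite gt_eqF //; lra.
have D1 : (g - 1) * expR eps + g * g + -1 * g != 0 by rewrite gt_eqF //; nra.
have lo : lambda_g g eps * y + (1 - lambda_g g eps) - (g + 1) / (g + expR eps)
    = lambda_g g eps * (y - g^-1).
  by rewrite /lambda_g; field; rewrite g0 D1 gE.
have hi : (g + 1) * expR eps / (g + expR eps) - (lambda_g g eps * y + (1 - lambda_g g eps))
    = lambda_g g eps * (g - y).
  by rewrite /lambda_g; field; rewrite g0 D1 gE.
have : 0 <= lambda_g g eps * (y - g^-1) by rewrite mulr_ge0 // subr_ge0.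
have : 0 <= lambda_g g eps * (g - y) by rewrite mulr_ge0 // subr_ge0.
by move=> *; apply/andP; split; lra.
Qed.

Lemma qstar_eps_bounds (R : realType) (g eps : R) : 1 < g -> 0 <= eps ->
  0 < (g + 1) / (g + expR eps) <= (g + 1) * expR eps / (g + expR eps).
Proof.
move=> g1 eps0; rewrite divr_gt0 ?addr_gt0 ?expR_gt0 //=; try lra.
have /(lambda_g_mixture_bounds g1 eps0) : g^-1 <= 1 <= g.
  by rewrite invf_le1 ?ltW ?(lt_trans ltr01) //=; lra.
have -> : lambda_g g eps * 1 + (1 - lambda_g g eps) = 1 by ring.
by move=> /andP[]; exact: le_trans.
Qed.

Lemma fdiv_qstar_le_bounded d (T : measurableType d) (R : realType) (mu : probability T R)
    (f : R -> R) (g eps r : R) (p : T -> R) :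
  convex_pos f -> 1 < g -> 0 <= eps -> 0 < r -> measurable_fun setT p ->
  (forall x, g^-1 <= p x <= g) -> (\int[mu]_x (p x)%:E = 1)%E ->
  (\int[mu]_x (qstar_eps g eps r p x)%:E = 1)%E ->
  (fdiv mu f p (qstar_eps g eps r p) <= fdiv mu f p (qstar_g g eps p))%E.
Proof.
move=> hf g1 eps0 r0 mp hp.
have gV0 : 0 < g^-1 by rewrite invr_gt0; lra.
have p0 x : 0 < p x by have := hp x; lra.
have /andP[a0 ab] := qstar_eps_bounds g1 eps0.
have mix x := lambda_g_mixture_bounds g1 eps0 (hp x).
rewrite !fdiv_pos // => [int_p int_clip|x|x]; last 2 first.
- by have := mix x; rewrite /qstar_g; lra.
- by have := clip_bounds (p x / r) ab; rewrite /qstar_eps; lra.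
apply: (integral_perspective_clip_le hf gV0 a0 r0 mp _ hp mix).
  by apply: measurable_funD; [exact: measurable_funM | exact: measurable_cst].
transitivity (1%E : \bar R); first exact: int_clip.
apply/esym/integral_mixture => //.
apply: (@bounded_integrable _ _ _ mu _ g) => // x.
by have := hp x; rewrite ler_norml; lra.
Qed.

Lemma fdiv_qstar_le d (T : measurableType d) (R : realType) (mu : probability T R)
    (f : R -> R) (g eps r : R) (p : T -> R) :
  convex_pos f -> 1 < g -> 0 <= eps -> 0 < r -> measurable_fun setT p ->
  {ae mu, forall x, g^-1 <= p x <= g} -> (\int[mu]_x (p x)%:E = 1)%E ->
  (\int[mu]_x (qstar_eps g eps r p x)%:E = 1)%E ->
  (fdiv mu f p (qstar_eps g eps r p) <= fdiv mu f p (qstar_g g eps p))%E.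
Proof.
move=> hf g1 eps0 r0 mp hae.
have gVg : g^-1 <= g by rewrite (le_trans (y := 1)) ?invf_le1 ?ltW //; lra.
pose pt x := clip (p x) g^-1 g.
have mpt : measurable_fun setT pt by exact: measurable_clip.
have p_pt : {ae mu, forall x, p x = pt x} by apply: filterS hae => x /clip_id.
have mqe : measurable_fun setT (qstar_eps g eps r (@id R)).
  by apply: measurable_clip; exact: mulrr_measurable.
have mqg : measurable_fun setT (qstar_g g eps (@id R)).
  by apply: measurable_funD; [exact: mulrl_measurable | exact: measurable_cst].
have mf := convex_pos_measurable hf.
rewrite (fdiv_comp_ae_eq mp mpt p_pt mf mqe) (fdiv_comp_ae_eq mp mpt p_pt mf mqg).
move=> int_p int_qe; apply: fdiv_qstar_le_bounded => //.
- by move=> x; exact: clip_bounds.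
- by rewrite -(integral_comp_ae_eq mp mpt p_pt (G := EFin)).
- rewrite -int_qe; apply/esym.
  by apply: (integral_comp_ae_eq mp mpt p_pt (G := EFin \o qstar_eps g eps r id)); exact/measurable_EFinP.
Qed.

Theorem proposition2 (R : realType) (n gamma : nat) (eps : R)
  (P0 P : probability (n.-tuple R) R) (p : n.-tuple R -> R)
  (f : R -> R) (r : R) :
  (2 <= gamma)%N -> 0 <= eps ->
  convex_pos f -> f 1 = 0 ->
  is_density P0 P p ->
  {ae P0, forall x, (gamma%:R)^-1 <= p x <= gamma%:R} ->
  0 < r ->
  (\int[P0]_x (qstar_eps gamma%:R eps r p x)%:E = 1)%E ->
  (fdiv P0 f p (qstar_eps gamma%:R eps r p)
     <= fdiv P0 f p (qstar_g gamma%:R eps p))%E.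
Proof.
move=> gamma2 eps0 hf _ [mp dP] hae r0.
apply: fdiv_qstar_le => //; first by rewrite ltr1n.
by rewrite -dP // probability_setT.
Qed.
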